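(* Let $(\Psi,\vec u,E)$ be a GCD-to-DIV triple in which $\Psi$ has $d$ variables, and let $p\in\mathbb P(\Psi)$. If $\Psi$ has a solution modulo $p$, then it has a solution $\vec b_p\in\mathbb Z^d$ modulo $p$ with $\|\vec b_p\|_\infty\le(d+1)\cdot\|\Psi\|_\infty^3\,p^2$.
   Context: For integers $a\mid b$ means there is a unique $q$ with $b=qa$. A system of divisibility constraints is $\Psi=\bigwedge_{i=1}^m f_i\mid g_i$ with linear integer polynomials $f_i\neq0$, $g_i$. For a prime $p$, $v_p$ is the $p$-adic valuation ($v_p(0)=\infty$); $\vec b$ is a solution of $\Psi$ modulo $p$ if $f_i(\vec b)\ne0$ and $v_p(f_i(\vec b))\le v_p(g_i(\vec b))$ for all $i$. $\mathbb P(\Psi)$ is the set of primes $p$ with $p\le m$ or $p$ dividing some coefficient or constant of some left-hand side $f_i$. $\|\Psi\|_\infty$ is the maximum absolute value of a coefficient or constant of a polynomial in $\Psi$; $\|\vec b\|_\infty$ is the maximum absolute entry. GCD-to-DIV triple: $(\Psi,\vec u,E)$ such that there are $d',m'\in\mathbb N$ and three disjoint families of variables $\vec z,\vec y,\vec w$ with: (1) $\Psi(\vec z,\vec y,\vec w)$ is a system of divisibility constraints in $m'$ variables, $\vec u\in\mathbb Z^{d'}$, $E\in\mathbb Z^{d'\times m'}$, each column of $E$ corresponding to a variable of $\Psi$; (2) each divisibility of $\Psi$ has the form $h(\vec z)\mid f(\vec y)$ or $f(\vec y)\mid g(\vec w)$ with $g$ non-constant, all polynomials have only non-negative coefficients and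 constants, and every left-hand side has a strictly positive constant; (3) each variable $z$ of $\vec z$ appears in a single polynomial of $\Psi$, which has the form $z+c$ with $c$ a positive integer and occurs in exactly two divisibilities (as left-hand side); (4) each variable $w$ of $\vec w$ appears in exactly two polynomials, of the forms $w$ and $w+c$ with $c$ a positive integer, each occurring exactly once in $\Psi$ (as right-hand sides); (5) every column of $E$ corresponding to a variable of $\vec z$ or $\vec w$ is zero. *)

From mathcomp Require Import all_boot all_order all_algebra.
Set Implicit Arguments. Unset Strict Implicit. Unset Printing Implicit Defensive.
Import Order.TTheory GRing.Theory Num.Theory.
Local Open Scope ring_scope.

(* A linear integer polynomial in d variables x_0..x_{d-1}:
   (coefficient vector, constant term); it denotes  sum_i P.1 i * x_i + P.2. *)
Definition lpoly (d : nat) := ({ffun 'I_d -> int} * int)%type.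

Definition lpoly_eval d (P : lpoly d) (b : 'I_d -> int) : int :=
  \sum_(i < d) P.1 i * b i + P.2.

Definition lpoly_nz d (P : lpoly d) : bool :=
  [exists i, P.1 i != 0] || (P.2 != 0).

(* A system of divisibility constraints  /\_i f_i | g_i : list of pairs (f_i, g_i). *)
Definition divsys (d : nat) := seq (lpoly d * lpoly d).

Definition wf_divsys d (Psi : divsys d) : bool := all (fun c : lpoly d * lpoly d => lpoly_nz c.1) Psi.

Definition lhss d (Psi : divsys d) : seq (lpoly d) := map fst Psi.
Definition rhss d (Psi : divsys d) : seq (lpoly d) := map snd Psi.
Definition polys d (Psi : divsys d) : seq (lpoly d) :=
  flatten [seq [:: c.1; c.2] | c <- Psi].

(* v_p(a) <= v_p(b), with v_p(0) = infinity; only used when a <> 0 *)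
Definition vp_le (p : nat) (a b : int) : bool :=
  (b == 0) || (logn p `|a|%N <= logn p `|b|%N)%N.

Definition sol_mod d (p : nat) (Psi : divsys d) (b : 'I_d -> int) : bool :=
  all (fun c : lpoly d * lpoly d => (lpoly_eval c.1 b != 0) &&
                vp_le p (lpoly_eval c.1 b) (lpoly_eval c.2 b)) Psi.

Definition inPset d (Psi : divsys d) (p : nat) : bool :=
  prime p &&
  ((p <= size Psi)%N ||
   has (fun c : lpoly d * lpoly d => [exists i, (c.1.1 i != 0) && (p%:Z %| c.1.1 i)%Z]
                 || ((c.1.2 != 0) && (p%:Z %| c.1.2)%Z)) Psi).

Definition lpoly_norm d (P : lpoly d) : nat :=
  maxn (\max_(i < d) `|P.1 i|%N) `|P.2|%N.
Definition divsys_norm d (Psi : divsys d) : nat :=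
  \max_(P <- polys Psi) lpoly_norm P.

Definition vec_norm d (b : 'I_d -> int) : nat := \max_(i < d) `|b i|%N.

Definition varc d (j : 'I_d) (c : int) : lpoly d :=
  ([ffun i => if i == j then 1 else 0], c).

Definition only_vars d (S : pred 'I_d) (P : lpoly d) : bool :=
  [forall i, (P.1 i != 0) ==> S i].
Definition nonneg_poly d (P : lpoly d) : bool :=
  [forall i, 0 <= P.1 i] && (0 <= P.2).
Definition nonconst_poly d (P : lpoly d) : bool := [exists i, P.1 i != 0].

Inductive vkind := VZ | VY | VW.
Definition isZ k := if k is VZ then true else false.
Definition isY k := if k is VY then true else false.
Definition isW k := if k is VW then true else false.

(* (Psi, u, E) is a GCD-to-DIV triple; Psi has m' = d variables, u in Z^d',
   E in Z^(d' x d).  The function kind partitions the variables into the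
   three disjoint families z (VZ), y (VY), w (VW). *)
Definition gcd_to_div_triple (d d' : nat) (Psi : divsys d)
    (u : 'cV[int]_d') (E : 'M[int]_(d', d)) : Prop :=
  exists kind : 'I_d -> vkind,
  wf_divsys Psi /\
  all (fun c : lpoly d * lpoly d =>
         (only_vars (fun i => isZ (kind i)) c.1 && only_vars (fun i => isY (kind i)) c.2)
      || [&& only_vars (fun i => isY (kind i)) c.1,
             only_vars (fun i => isW (kind i)) c.2 & nonconst_poly c.2]) Psi /\
  all (@nonneg_poly d) (polys Psi) /\
  all (fun c : lpoly d * lpoly d => 0 < c.1.2) Psi /\
  (forall x : 'I_d, kind x = VZ ->
     exists c : int, 0 < c /\
       count (pred1 (varc x c)) (polys Psi) = 2%N /\
       count (pred1 (varc x c)) (lhss Psi) = 2%N /\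
       (forall P, P \in polys Psi -> P.1 x != 0 -> P = varc x c)) /\
  (forall x : 'I_d, kind x = VW ->
     exists c : int, 0 < c /\
       count (pred1 (varc x 0)) (polys Psi) = 1%N /\
       count (pred1 (varc x 0)) (rhss Psi) = 1%N /\
       count (pred1 (varc x c)) (polys Psi) = 1%N /\
       count (pred1 (varc x c)) (rhss Psi) = 1%N /\
       (forall P, P \in polys Psi -> P.1 x != 0 -> P = varc x 0 \/ P = varc x c)) /\
  (forall (i : 'I_d') (j : 'I_d), kind j <> VY -> E i j = 0).

From mathcomp Require Import all_boot all_order all_algebra zify.
Import Order.TTheory GRing.Theory Num.Theory.
Local Open Scope ring_scope.
Set Implicit Arguments. Unset Strict Implicit.

(* Let b solve Psi modulo p, N = ||Psi|| and K least with N < p^K, so that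
   p^K <= p * N.  A small solution is obtained by sending
   - each y-variable to the residue of b_y modulo p^K, in [0, p^K);
   - each z-variable (occurring only in z + c) to 1 - c, so that z + c = 1;
   - each w-variable (occurring only in w and w + c) to 0 or to -c, which
     makes one of its two divisibilities trivial.
   Valuations below K survive reduction modulo p^K and every constant has
   valuation below K, so the divisibilities h(z) | f(y) still hold.  For w,
   the two left-hand sides cannot both exceed v_p(c): p would then divide
   b_w and b_w + c, hence c, once more than allowed.  The result has norm at
   most p * N, below the bound of the theorem.  The file develops p-adic
   divisibility and evaluation of linear polynomials, reads the shifts c off
   the triple, builds the small solution in a section and concludes. *)

Section PAdic.
Variable p : nat.
Hypothesis p_prime : prime p.

Definition pdvd (j : nat) (x : int) : bool := ((p ^ j)%:Z %| x)%Z.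

Definition vp (x : int) : nat := logn p `|x|%N.

Lemma pdvd0 j : pdvd j 0.
Proof. by rewrite /pdvd dvdz0. Qed.

Lemma pdvdN j x : pdvd j (- x) = pdvd j x.
Proof. by rewrite /pdvd rpredN. Qed.

Lemma pdvdE j x : x != 0 -> pdvd j x = (j <= vp x)%N.
Proof. by move=> x_nz; rewrite /pdvd dvdzE -pfactor_dvdn // absz_gt0. Qed.

Lemma vp_leE a b : vp_le p a b = pdvd (vp a) b.
Proof.
rewrite /vp_le; case: eqP => [->|/eqP b_nz] /=; first by rewrite pdvd0.
by rewrite pdvdE.
Qed.

Lemma pdvd_trans j a b : a != 0 -> pdvd j a -> pdvd (vp a) b -> pdvd j b.
Proof.
move=> a_nz; rewrite pdvdE // => j_le; apply: dvdz_trans.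
by rewrite dvdzE /=; apply: dvdn_exp2l.
Qed.

Lemma pdvd_cong K j x y :
  (j <= K)%N -> ((p ^ K)%:Z %| x - y)%Z -> pdvd j x = pdvd j y.
Proof.
move=> j_le K_dvd; have xy_dvd : pdvd j (x - y).
  by apply: dvdz_trans K_dvd; rewrite dvdzE /=; apply: dvdn_exp2l.
rewrite -[x](subrK y) /pdvd rpredDl //.
Qed.

Lemma vp_lt_pow K x : x != 0 -> (`|x| < p ^ K)%N -> (vp x < K)%N.
Proof.
move=> x_nz lt_pK; rewrite -(ltn_exp2l _ _ (prime_gt1 p_prime)).
apply: leq_ltn_trans lt_pK; apply: dvdn_leq; first by rewrite absz_gt0.
exact: pfactor_dvdnn.
Qed.
End PAdic.

Lemma eval_varc d (j : 'I_d) c b : lpoly_eval (varc j c) b = b j + c.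
Proof.
rewrite /lpoly_eval (bigD1 j) //= ffunE eqxx mul1r big1 ?addr0 // => i /negbTE ij.
by rewrite ffunE ij mul0r.
Qed.

Lemma eval_agree d (f : lpoly d) b1 b2 :
  (forall i, f.1 i != 0 -> b1 i = b2 i) -> lpoly_eval f b1 = lpoly_eval f b2.
Proof.
move=> eq_b; rewrite /lpoly_eval; congr (_ + _); apply: eq_bigr => i _.
by case: (eqVneq (f.1 i) 0) => [->|/eq_b ->]; rewrite ?mul0r.
Qed.

Lemma eval_const d (f : lpoly d) b :
  (forall i, f.1 i = 0) -> lpoly_eval f b = f.2.
Proof. by move=> f0; rewrite /lpoly_eval big1 ?add0r // => i _; rewrite f0 mul0r. Qed.

Lemma eval_cong d (f : lpoly d) b1 b2 (M : int) :
  (forall i, (M %| b1 i - b2 i)%Z) -> (M %| lpoly_eval f b1 - lpoly_eval f b2)%Z.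
Proof.
move=> congr_b; rewrite /lpoly_eval opprD addrACA subrr addr0 -sumrB.
by apply: rpred_sum => i _; rewrite -mulrBr; apply: dvdz_mull.
Qed.

Lemma eval_gt0 d (f : lpoly d) b :
  nonneg_poly f -> 0 < f.2 -> (forall i, 0 <= b i) -> 0 < lpoly_eval f b.
Proof.
move=> /andP[/forallP coef_ge0 _] cst_gt0 b_ge0; rewrite /lpoly_eval ltr_wpDl //.
by apply: sumr_ge0 => i _; apply: mulr_ge0.
Qed.

Lemma varc_inj d (x : 'I_d) c c' : varc x c = varc x c' -> c = c'.
Proof. by move/(congr1 snd). Qed.

Lemma varc_coef d (x : 'I_d) c : (varc x c).1 x != 0.
Proof. by rewrite ffunE eqxx. Qed.

Lemma absz_lt_nat (x : int) (M : nat) : 0 <= x -> x < M%:Z -> (`|x| < M)%N.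
Proof. by move=> x_ge0 x_lt; lia. Qed.

Lemma absz_1B_le (x : int) (N : nat) : 0 < x -> (`|x| <= N)%N -> (`|1 - x| <= N)%N.
Proof. by move=> x_gt0 x_le; lia. Qed.

Lemma mem_polys1 d (Psi : divsys d) cs : cs \in Psi -> cs.1 \in polys Psi.
Proof.
move=> cs_in; apply/flattenP; exists [:: cs.1; cs.2]; last by rewrite inE eqxx.
by apply/mapP; exists cs.
Qed.

Lemma mem_polys2 d (Psi : divsys d) cs : cs \in Psi -> cs.2 \in polys Psi.
Proof.
move=> cs_in; apply/flattenP; exists [:: cs.1; cs.2]; last by rewrite !inE eqxx orbT.
by apply/mapP; exists cs.
Qed.

Lemma const_le_norm d (Psi : divsys d) P :
  P \in polys Psi -> (`|P.2| <= divsys_norm Psi)%N.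
Proof.
move=> P_in; apply: leq_trans (leq_bigmax_seq _ P_in _) => //; exact: leq_maxr.
Qed.

Lemma divsys_norm_gt0 d (Psi : divsys d) :
  all (fun cs : lpoly d * lpoly d => 0 < cs.1.2) Psi -> Psi != [::] ->
  (0 < divsys_norm Psi)%N.
Proof.
case: Psi => [//|cs Psi] /= /andP[cs_pos _] _.
apply: leq_trans (const_le_norm (mem_polys1 (mem_head cs Psi))).
by rewrite absz_gt0 gt_eqF.
Qed.

Definition triple_shape d (kind : 'I_d -> vkind) (cs : lpoly d * lpoly d) : bool :=
  (only_vars (fun i => isZ (kind i)) cs.1 && only_vars (fun i => isY (kind i)) cs.2)
  || [&& only_vars (fun i => isY (kind i)) cs.1,
         only_vars (fun i => isW (kind i)) cs.2 & nonconst_poly cs.2].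

(* the positive c of some polynomial x + c of Psi (0 if there is none) *)
Definition shift d (Psi : divsys d) (x : 'I_d) : int :=
  head 0 [seq P.2 | P <- polys Psi & (P == varc x P.2) && (0 < P.2)].

Lemma shift_spec d (Psi : divsys d) x c :
  0 < c -> varc x c \in polys Psi ->
  0 < shift Psi x /\ varc x (shift Psi x) \in polys Psi.
Proof.
move=> c_gt0 occ.
have : varc x c \in [seq P <- polys Psi | (P == varc x P.2) && (0 < P.2)].
  by rewrite mem_filter /= eqxx c_gt0.
rewrite /shift; case def_s : [seq P <- _ | _] => [//|P s] _ /=.
have : P \in [seq P <- polys Psi | (P == varc x P.2) && (0 < P.2)].
  by rewrite def_s mem_head.
by rewrite mem_filter => /andP[/andP[/eqP {2}-> P2_gt0] P_in].
Qed.

(* A GCD-to-DIV triple, with the shifts of the z- and w-variables made explicit;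
   the occurrence counts of (3) and (4) are only used to know that these shifts
   exist and occur in Psi. *)
Lemma triple_shifts d d' (Psi : divsys d) u (E : 'M[int]_(d', d)) :
  gcd_to_div_triple Psi u E ->
  exists kind : 'I_d -> vkind,
  [/\ all (triple_shape kind) Psi, all (@nonneg_poly d) (polys Psi),
      all (fun cs : lpoly d * lpoly d => 0 < cs.1.2) Psi,
      (forall x, ~~ isY (kind x) ->
         0 < shift Psi x /\ varc x (shift Psi x) \in polys Psi) &
      (forall x P, kind x = VZ -> P \in polys Psi -> P.1 x != 0 ->
         P = varc x (shift Psi x)) /\
      (forall x P, kind x = VW -> P \in polys Psi -> P.1 x != 0 ->
         P = varc x 0 \/ P = varc x (shift Psi x))].
Proof.
case=> kind [_ [shapeP [nonnegP [lhsP [zP [wP _]]]]]].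
have count_mem (P : lpoly d) n : count (pred1 P) (polys Psi) = n.+1 -> P \in polys Psi.
  by move=> cnt; rewrite -has_pred1 has_count cnt.
have zform x : kind x = VZ -> exists c, [/\ 0 < c, varc x c \in polys Psi &
    forall P, P \in polys Psi -> P.1 x != 0 -> P = varc x c].
  by case/zP=> c [c_gt0 [/count_mem occ [_ formP]]]; exists c.
have wform x : kind x = VW -> exists c, [/\ 0 < c, varc x c \in polys Psi &
    forall P, P \in polys Psi -> P.1 x != 0 -> P = varc x 0 \/ P = varc x c].
  by case/wP=> c [c_gt0 [_ [_ [/count_mem occ [_ formP]]]]]; exists c.
exists kind; split => // [x|]; last split.
- case kx: (kind x) => // _.
    by have [c [c_gt0 occ _]] := zform x kx; apply: shift_spec occ.
  by have [c [c_gt0 occ _]] := wform x kx; apply: shift_spec occ.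
- move=> x P /zform[c [c_gt0 occ formP]].
  have [_ /formP/(_ (varc_coef _ _))/varc_inj ->] := shift_spec c_gt0 occ.
  exact: formP.
- move=> x P /wform[c [c_gt0 occ formP]].
  have [shift_gt0 /formP/(_ (varc_coef _ _))] := shift_spec c_gt0 occ.
  case=> /varc_inj shiftE; last by rewrite shiftE; apply: formP.
  by rewrite shiftE ltxx in shift_gt0.
Qed.

Section SmallSolution.
Variables (d : nat) (Psi : divsys d) (kind : 'I_d -> vkind) (c : 'I_d -> int).
Variable p : nat.
Hypothesis p_prime : prime p.
Hypothesis shapeP : all (triple_shape kind) Psi.
Hypothesis nonnegP : all (@nonneg_poly d) (polys Psi).
Hypothesis lhs_cst_gt0 : all (fun cs : lpoly d * lpoly d => 0 < cs.1.2) Psi.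
Hypothesis shift_occ :
  forall x, ~~ isY (kind x) -> 0 < c x /\ varc x (c x) \in polys Psi.
Hypothesis z_form : forall x P, kind x = VZ -> P \in polys Psi -> P.1 x != 0 ->
  P = varc x (c x).
Hypothesis w_form : forall x P, kind x = VW -> P \in polys Psi -> P.1 x != 0 ->
  P = varc x 0 \/ P = varc x (c x).
Variable b : 'I_d -> int.
Hypothesis b_sol : sol_mod p Psi b.

Local Notation N := (divsys_norm Psi).
Local Notation eval := lpoly_eval.
Local Notation zvars := (fun i => isZ (kind i)).
Local Notation yvars := (fun i => isY (kind i)).
Local Notation wvars := (fun i => isW (kind i)).

Definition sat (a : 'I_d -> int) (cs : lpoly d * lpoly d) : bool :=
  (eval cs.1 a != 0) && vp_le p (eval cs.1 a) (eval cs.2 a).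

Lemma b_sat cs : cs \in Psi ->
  eval cs.1 b != 0 /\ pdvd p (vp p (eval cs.1 b)) (eval cs.2 b).
Proof.
by move=> cs_in; have /andP[-> /=] := allP b_sol _ cs_in; rewrite (vp_leE p_prime).
Qed.

Definition expo : nat := (trunc_log p N).+1.
Definition modulus : nat := (p ^ expo)%N.

Lemma norm_lt_modulus : (N < modulus)%N.
Proof. exact: trunc_log_ltn (prime_gt1 p_prime). Qed.

Lemma modulus_le : (0 < N)%N -> (modulus <= p * N)%N.
Proof.
by move=> N_gt0; rewrite /modulus /expo expnS leq_mul2l trunc_logP ?prime_gt1 ?orbT.
Qed.

Lemma vp_const_lt P : P \in polys Psi -> P.2 != 0 -> (vp p P.2 < expo)%N.
Proof.
move=> P_in P2_nz; apply: vp_lt_pow => //.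
exact: leq_ltn_trans (const_le_norm P_in) norm_lt_modulus.
Qed.

Definition yred (x : 'I_d) : int := (b x %% modulus%:Z)%Z.

Lemma modulus_gt0 : (0 < modulus)%N.
Proof. by rewrite expn_gt0 prime_gt0. Qed.

Lemma yred_ge0 x : 0 <= yred x.
Proof. by rewrite modz_ge0 // eqz_nat -lt0n modulus_gt0. Qed.

Lemma yred_lt x : yred x < modulus%:Z.
Proof. by rewrite ltz_pmod // ltz_nat modulus_gt0. Qed.

Lemma pdvd_yred j f : (j <= expo)%N -> pdvd p j (eval f yred) = pdvd p j (eval f b).
Proof.
move=> j_le; apply: (pdvd_cong j_le); apply: eval_cong => x.
rewrite /yred {2}(divz_eq (b x) modulus%:Z) opprD addrCA subrr addr0 rpredN.
exact/dvdz_mull/dvdzz.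
Qed.

Lemma lhs_yred_gt0 cs : cs \in Psi -> 0 < eval cs.1 yred.
Proof.
move=> cs_in; apply: eval_gt0 (allP lhs_cst_gt0 _ cs_in) yred_ge0.
exact: (allP nonnegP) (mem_polys1 cs_in).
Qed.

(* setting the w-variable x to 0 satisfies the divisibility with right-hand
   side x + c *)
Definition w_zero_ok (x : 'I_d) : bool :=
  all (fun cs : lpoly d * lpoly d =>
         (cs.2 == varc x (c x)) ==> pdvd p (vp p (eval cs.1 yred)) (c x)) Psi.

Definition small (x : 'I_d) : int :=
  match kind x with
  | VZ => 1 - c x
  | VY => yred x
  | VW => if w_zero_ok x then 0 else - c x
  end.

Lemma eval_small_y f : only_vars yvars f -> eval f small = eval f yred.
Proof.
move=> /forallP f_y; apply: eval_agree => i /(implyP (f_y i)).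
by rewrite /small; case: (kind i).
Qed.

Lemma sat_small_z f g : (f, g) \in Psi ->
  only_vars zvars f -> only_vars yvars g -> sat small (f, g).
Proof.
move=> fg_in /forallP f_z g_y; have f_in : f \in polys Psi := mem_polys1 fg_in.
rewrite /sat /= (eval_small_y g_y) (vp_leE p_prime).
case: (boolP [exists i, f.1 i != 0]) => [/existsP[i fi] | /existsPn f_cst].
  have zi : kind i = VZ by move: (implyP (f_z i) fi); case: (kind i).
  rewrite (z_form zi f_in fi) eval_varc /small zi subrK oner_eq0.
  by rewrite /vp logn1 /pdvd expn0 dvd1z.
have f0 i : f.1 i = 0 by apply/eqP; rewrite -[_ == _]negbK f_cst.
have [fb_nz fb_dvd] := b_sat fg_in; rewrite /= !(eval_const _ f0) in fb_nz fb_dvd *.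
by rewrite fb_nz pdvd_yred // ltnW // (vp_const_lt f_in fb_nz).
Qed.

(* The key step: if x = 0 fails for the divisibility f' | x + c, then its
   other divisibility f | x has v_p(f) <= v_p(c).  Otherwise p^(v_p(c)+1)
   would divide both b_x and b_x + c, hence c. *)
Lemma w_shift_dvd i f : kind i = VW -> ~~ w_zero_ok i -> (f, varc i 0) \in Psi ->
  pdvd p (vp p (eval f yred)) (c i).
Proof.
move=> wi /allPn[[f' g'] fg'_in /=]; rewrite negb_imply => /andP[/eqP g'E f'_big] fg_in.
have [c_gt0 c_occ] : 0 < c i /\ varc i (c i) \in polys Psi.
  by apply: shift_occ; rewrite wi.
have c_nz : c i != 0 by rewrite gt_eqF.
have t_lt : (vp p (c i) < expo)%N by apply: vp_const_lt c_occ _.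
rewrite pdvdE // in f'_big; rewrite pdvdE // leqNgt; apply/negP => f_big.
have rhs_dvd cs : cs \in Psi -> (vp p (c i) < vp p (eval cs.1 yred))%N ->
    pdvd p (vp p (c i)).+1 (eval cs.2 b).
  move=> cs_in lt_cs; have [nz dvd] := b_sat cs_in.
  apply: (pdvd_trans p_prime nz _ dvd).
  by rewrite -pdvd_yred // pdvdE // gt_eqF // lhs_yred_gt0.
have := rhs_dvd _ fg_in f_big; have := rhs_dvd _ fg'_in; rewrite ltnNge f'_big.
rewrite /= g'E !eval_varc addr0 => /(_ isT) bc_dvd b_dvd.
by move: bc_dvd; rewrite /pdvd rpredDl // -/(pdvd _ _ _) pdvdE // ltnn.
Qed.

Lemma sat_small_w f g : (f, g) \in Psi -> only_vars yvars f ->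
  only_vars wvars g -> nonconst_poly g -> sat small (f, g).
Proof.
move=> fg_in f_y /forallP g_w /existsP[i gi].
have wi : kind i = VW by move: (implyP (g_w i) gi); case: (kind i).
rewrite /sat /= (eval_small_y f_y) gt_eqF ?(lhs_yred_gt0 fg_in) //= (vp_leE p_prime).
have g_in : g \in polys Psi := mem_polys2 fg_in.
case: (w_form wi g_in gi) => g_def; subst g;
  rewrite eval_varc /small wi; case: ifP => [ok|/negbT not_ok].
- by rewrite addr0 pdvd0.
- by rewrite addr0 pdvdN; apply: w_shift_dvd.
- by rewrite add0r; have := allP ok _ fg_in; rewrite /= eqxx.
- by rewrite addNr pdvd0.
Qed.

Lemma small_sol : sol_mod p Psi small.
Proof.
apply/allP => -[f g] fg_in; case/orP: (allP shapeP _ fg_in) => /= [/andP[]|/and3P[]].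
  exact: sat_small_z fg_in.
exact: sat_small_w fg_in.
Qed.

(* all entries are at most max(N, p^K) <= p * N *)
Lemma small_norm : (0 < N)%N -> (vec_norm small <= p * N)%N.
Proof.
move=> N_gt0; have p_gt1 := prime_gt1 p_prime.
have pN_ge : (N <= p * N)%N by rewrite leq_pmull // ltnW.
apply/bigmax_leqP => x _; rewrite /small.
have shift_le : ~~ isY (kind x) -> 0 < c x /\ (`|c x| <= N)%N.
  by case/shift_occ => c_gt0 /const_le_norm.
move: shift_le; case: (kind x) => [/(_ isT)[c_gt0 c_le] | _ | /(_ isT)[c_gt0 c_le]].
- exact: leq_trans (absz_1B_le c_gt0 c_le) pN_ge.
- exact: ltnW (leq_trans (absz_lt_nat (yred_ge0 x) (yred_lt x)) (modulus_le N_gt0)).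
- by apply: leq_trans pN_ge; case: ifP; rewrite ?abszN.
Qed.
End SmallSolution.

Lemma small_bound_le d N p :
  (0 < N)%N -> (0 < p)%N -> (p * N <= d.+1 * N ^ 3 * p ^ 2)%N.
Proof.
move=> N_gt0 p_gt0.
have N_le : (N <= N ^ 3)%N by rewrite -[X in (X <= _)%N]expn1 leq_pexp2l.
have p_le : (p <= p ^ 2)%N by rewrite -[X in (X <= _)%N]expn1 leq_pexp2l.
rewrite mulnC -mulnA; apply: leq_trans (leq_pmull _ _) => //; exact: leq_mul.
Qed.

Theorem mainTheorem17 (d d' : nat) (Psi : divsys d) (u : 'cV[int]_d')
    (E : 'M[int]_(d', d)) (p : nat) :
  gcd_to_div_triple Psi u E ->
  inPset Psi p ->
  (exists b : 'I_d -> int, sol_mod p Psi b) ->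
  exists bp : 'I_d -> int, sol_mod p Psi bp /\
    (vec_norm bp <= d.+1 * divsys_norm Psi ^ 3 * p ^ 2)%N.
Proof.
move=> /triple_shifts[kind [shapeP nonnegP lhsP occP [zP wP]]] /andP[p_prime _] [b b_sol].
have [->|Psi_ne] := eqVneq Psi [::].
  by exists (fun=> 0); split => //; rewrite /vec_norm big1.
have N_gt0 := divsys_norm_gt0 lhsP Psi_ne.
exists (small Psi kind (shift Psi) p b); split.
  exact: (small_sol p_prime shapeP nonnegP lhsP occP zP wP b_sol).
apply: leq_trans (small_norm p_prime occP b N_gt0) _.
exact: small_bound_le N_gt0 (prime_gt0 p_prime).
Qed.
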